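(* Let $\mathcal{H}$ be a complex Hilbert space of $\mathbb{C}^n$-valued functions. Let $D$ be a selfadjoint operator on $\mathcal{H}$ with domain $\mathcal{D}_0$. Let $W_L,W_R$ be bounded selfadjoint operators on $\mathcal{H}$ such that: - $W_LW_R=W_RW_L$; - $W_L^{-1}$ and $W_R^{-1}$ exist and are bounded; - $W_RW_L^{-1}$ is selfadjoint; - $W_RW_L^{-1}\ge c\,\mathrm{id}$ for some $c>0$. Let $M=W_L\,D\,W_R$ with domain $\mathcal{D}_R:=W_R^{-1}\mathcal{D}_0$. Assume that complex conjugation $(C\Psi)(x)=\overline{\Psi(x)}$ satisfies $C\mathcal{D}_R=\mathcal{D}_R$ and $CMC=-M$. Then $M$ is a closed operator on $\mathcal{H}$. *)

From HB Require Import structures.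
From mathcomp Require Import all_boot all_order all_algebra.
From mathcomp Require Import reals.
From mathcomp Require Import complex.
Set Implicit Arguments. Unset Strict Implicit. Unset Printing Implicit Defensive.
Import Order.TTheory GRing.Theory Num.Theory.
Local Open Scope ring_scope.

Section Hilbert.
Variable R : realType.
Variable H : lmodType R[i].
Variable ip : H -> H -> R[i].

Definition is_inner_product : Prop :=
  [/\ forall x y, ip x y = conjc (ip y x),
      forall (a : R[i]) x y z, ip (a *: x + y) z = a * ip x z + ip y z,
      forall x, 0 <= ip x x
    & forall x, ip x x = 0 -> x = 0].

Definition hnorm (x : H) : R := Num.sqrt (complex.Re (ip x x)).

Definition hconv (u : nat -> H) (l : H) : Prop :=
  forall e : R, 0 < e -> exists N, forall k, (N <= k)%N -> hnorm (u k - l) < e.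

Definition hcauchy (u : nat -> H) : Prop :=
  forall e : R, 0 < e -> exists N, forall k m, (N <= k)%N -> (N <= m)%N ->
    hnorm (u k - u m) < e.

Definition is_hilbert : Prop :=
  is_inner_product /\ (forall u, hcauchy u -> exists l, hconv u l).

Definition is_linear_op (W : H -> H) : Prop :=
  forall (a : R[i]) x y, W (a *: x + y) = a *: W x + W y.

Definition bounded_op (W : H -> H) : Prop :=
  is_linear_op W /\ exists K : R, forall x, hnorm (W x) <= K * hnorm x.

Definition bounded_selfadjoint (W : H -> H) : Prop :=
  bounded_op W /\ forall x y, ip (W x) y = ip x (W y).

Definition bounded_inverse (W Winv : H -> H) : Prop :=
  bounded_op Winv /\ (forall x, W (Winv x) = x) /\ (forall x, Winv (W x) = x).

Definition op_ge_scalar (A : H -> H) (c : R) : Prop :=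
  forall x, (c%:C)%C * ip x x <= ip (A x) x.

(* unbounded operators: a domain (a predicate on H) and an action on it *)
Definition is_subspace (dom : H -> Prop) : Prop :=
  dom 0 /\ forall (a : R[i]) x y, dom x -> dom y -> dom (a *: x + y).

Definition dense (dom : H -> Prop) : Prop :=
  forall x (e : R), 0 < e -> exists y, dom y /\ hnorm (x - y) < e.

Definition linear_on (dom : H -> Prop) (T : H -> H) : Prop :=
  forall (a : R[i]) x y, dom x -> dom y -> T (a *: x + y) = a *: T x + T y.

Definition adjoint_dom (dom : H -> Prop) (T : H -> H) (y : H) : Prop :=
  exists z, forall x, dom x -> ip (T x) y = ip x z.

(* (dom, T) is selfadjoint: densely defined, linear, symmetric, and the
   domain of its adjoint equals dom (so T^* = T) *)
Definition selfadjoint (dom : H -> Prop) (T : H -> H) : Prop :=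
  [/\ is_subspace dom, dense dom, linear_on dom T,
      (forall x y, dom x -> dom y -> ip (T x) y = ip x (T y))
    & (forall y, adjoint_dom dom T y <-> dom y)].

Definition closed_op (dom : H -> Prop) (T : H -> H) : Prop :=
  forall (u : nat -> H) x y, (forall k, dom (u k)) ->
    hconv u x -> hconv (fun k => T (u k)) y -> dom x /\ T x = y.

End Hilbert.

From HB Require Import structures.
From mathcomp Require Import all_boot all_order all_algebra.
From mathcomp Require Import reals complex.
From mathcomp Require Import ring lra.
Set Implicit Arguments.
Unset Strict Implicit.
Unset Printing Implicit Defensive.
Import Order.TTheory GRing.Theory Num.Theory.
Local Open Scope ring_scope.
Local Open Scope complex_scope.

(* A selfadjoint operator D is closed: if u_k -> x and D u_k -> y, then
   <D z, x> = <z, y> for every z in the domain, so x lies in the domain of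
   D^* = D, and D x - y is orthogonal to the dense domain, hence zero.
   Closedness survives composition on the right with a bounded operator and on
   the left with a bounded operator with bounded inverse, so M = W_L D W_R is
   closed. *)

Section ComplexFacts.
Variable R : rcfType.

Lemma ge0_RRe (z : R[i]) : 0 <= z -> z = (complex.Re z)%:C.
Proof. by move=> /ger0_real/RRe_real. Qed.

Lemma conjc_ge0 (z : R[i]) : 0 <= z -> conjc z = z.
Proof. by move/ger0_real/conj_Creal. Qed.

Lemma normr_small_eq0 (w : R[i]) : (forall e : R, 0 < e -> `|w| < e%:C) -> w = 0.
Proof.
move=> small; have Ew := ge0_RRe (normr_ge0 w).
have : 0 <= complex.Re `|w| by rewrite -ler0c -Ew.
rewrite le_eqVlt => /predU1P[Re0 | /small]; last by rewrite -Ew ltxx.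
by apply/normr0_eq0; rewrite Ew -Re0.
Qed.

End ComplexFacts.

Section InnerProductSpace.
Variables (R : realType) (H : lmodType R[i]) (ip : H -> H -> R[i]).
Hypothesis ipP : is_inner_product ip.

Lemma ipZBl x y t w : ip (x - t *: y) w = ip x w - t * ip y w.
Proof. by case: ipP => _ ipl _ _; rewrite addrC -scaleNr ipl mulNr addrC. Qed.

Lemma ipZBr x y t w : ip w (x - t *: y) = ip w x - conjc t * ip w y.
Proof. by case: ipP => ipC _ _ _; rewrite ipC ipZBl rmorphB rmorphM /= -!ipC. Qed.

Lemma ipBl x y w : ip (x - y) w = ip x w - ip y w.
Proof. by have := ipZBl x y 1 w; rewrite scale1r mul1r. Qed.

Lemma ipBr x y w : ip w (x - y) = ip w x - ip w y.
Proof. by have := ipZBr x y 1 w; rewrite scale1r conjc1 mul1r. Qed.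

Lemma ip0r w : ip w 0 = 0.
Proof. by have := ipBr 0 0 w; rewrite !subrr. Qed.

Lemma hnorm_ge0 x : 0 <= hnorm ip x.
Proof. exact: sqrtr_ge0. Qed.

Lemma ip_hnorm x : ip x x = (hnorm ip x ^+ 2)%:C.
Proof.
case: ipP => _ _ ip_ge0 _.
by rewrite /hnorm sqr_sqrtr -?ler0c -ge0_RRe.
Qed.

Lemma normr_ip_le a b : `|ip a b| <= (hnorm ip a * hnorm ip b)%:C.
Proof.
case: ipP => ipC _ ip_ge0 ip0.
have [b0|bnz] := eqVneq (ip b b) 0.
  by rewrite (ip0 _ b0) ip0r normr0 ler0c mulr_ge0 ?hnorm_ge0.
have b_gt0 : 0 < ip b b by rewrite lt_def bnz ip_ge0.
set z := ip a b.
(* expand [0 <= <a - t b, a - t b>] at the minimising [t = <a, b> / <b, b>] *)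
have key : z * z^* <= ip a a * ip b b.
  have := ip_ge0 (a - (z / ip b b) *: b).
  rewrite ipZBl !ipZBr rmorphM /= conjc_inv (conjc_ge0 (ip_ge0 b)).
  rewrite -/z [ip b a]ipC -/z.
  have -> : ip a a - z^* / ip b b * z - z / ip b b * (z^* - z^* / ip b b * ip b b)
     = ip a a - z * z^* / ip b b by field.
  by rewrite subr_ge0 ler_pdivrMr.
rewrite -sqr_normc [ip a a]ip_hnorm [ip b b]ip_hnorm -rmorphM -exprMn rmorphXn /= in key.
by rewrite -(ler_pXn2r (n:=2)) // qualifE /= ?normr_ge0 // ler0c mulr_ge0 ?hnorm_ge0.
Qed.

Lemma hconv_ip_eq (u v : nat -> H) l m a b :
  hconv ip u l -> hconv ip v m -> (forall k, ip a (u k) = ip b (v k)) ->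
  ip a l = ip b m.
Proof.
move=> ul vm uv; apply/eqP; rewrite -subr_eq0; apply/eqP; apply: normr_small_eq0 => e e_gt0.
set K := hnorm ip a + hnorm ip b + 1.
have K_gt0 : 0 < K by rewrite ltr_pwDr // addr_ge0 ?hnorm_ge0.
have [N1 uN1] := ul (e / K) (divr_gt0 e_gt0 K_gt0).
have [N2 vN2] := vm (e / K) (divr_gt0 e_gt0 K_gt0).
have uk := uN1 _ (leq_maxl N1 N2); have vk := vN2 _ (leq_maxr N1 N2).
have -> : ip a l - ip b m = ip b (v (maxn N1 N2) - m) - ip a (u (maxn N1 N2) - l).
  by rewrite !ipBr uv; ring.
apply: le_lt_trans (ler_normB _ _) _.
apply: le_lt_trans (lerD (normr_ip_le _ _) (normr_ip_le _ _)) _.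
rewrite -rmorphD ltcR.
have eK : e / K * K = e by rewrite divfK ?gt_eqF.
have := hnorm_ge0 a; have := hnorm_ge0 b.
have := hnorm_ge0 (u (maxn N1 N2) - l); have := hnorm_ge0 (v (maxn N1 N2) - m).
rewrite /K in eK; nra.
Qed.

Lemma dense_orthogonal_eq0 dom d :
  dense ip dom -> (forall z, dom z -> ip z d = 0) -> d = 0.
Proof.
move=> dom_dense d_orth; case: ipP => _ _ _ ip0; apply: ip0.
apply: normr_small_eq0 => e e_gt0.
set K := hnorm ip d + 1.
have K_gt0 : 0 < K by rewrite ltr_pwDr ?hnorm_ge0.
have [z [dz dz_near]] := dom_dense d _ (divr_gt0 e_gt0 K_gt0).
rewrite -[ip d d]subr0 -(d_orth _ dz) -ipBl.
apply: le_lt_trans (normr_ip_le _ _) _; rewrite ltcR.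
have eK : e / K * K = e by rewrite divfK ?gt_eqF.
have := hnorm_ge0 d; have := hnorm_ge0 (d - z).
rewrite /K in eK; nra.
Qed.

Lemma selfadjoint_closed dom T : selfadjoint ip dom T -> closed_op ip dom T.
Proof.
case=> _ dom_dense _ Tsym adjE u x y du ux Tuy.
have Tx z : dom z -> ip (T z) x = ip z y.
  by move=> dz; apply: hconv_ip_eq ux Tuy _ => k; apply: Tsym.
have dx : dom x by apply/adjE; exists y.
split=> //; apply/eqP; rewrite -subr_eq0; apply/eqP.
by apply: (dense_orthogonal_eq0 dom_dense) => z dz; rewrite ipBr -Tsym // Tx // subrr.
Qed.

End InnerProductSpace.

Section BoundedOperators.
Variables (R : realType) (H : lmodType R[i]) (ip : H -> H -> R[i]).

Lemma hconv_bounded W u l : bounded_op ip W -> hconv ip u l ->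
  hconv ip (fun k => W (u k)) (W l).
Proof.
move=> [Wlin [K WK]] ul e e_gt0.
set K' := `|K| + 1.
have K'_gt0 : 0 < K' by rewrite ltr_pwDr.
have [N uN] := ul _ (divr_gt0 e_gt0 K'_gt0).
exists N => k Nk.
have -> : W (u k) - W l = W (u k - l).
  by have := Wlin (-1) l (u k); rewrite !scaleN1r (addrC (u k)) => ->; rewrite addrC.
have eK : e / K' * K' = e by rewrite divfK ?gt_eqF.
have := uN k Nk; have := WK (u k - l); have := hnorm_ge0 ip (u k - l).
have := ler_norm K; have := normr_ge0 K; rewrite /K' in eK; nra.
Qed.

Lemma closed_op_bounded_comp dom T A B Binv :
  closed_op ip dom T -> bounded_op ip A -> bounded_inverse ip B Binv ->
  closed_op ip (fun f => dom (A f)) (fun f => B (T (A f))).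
Proof.
move=> Tclosed Abd [Binvbd [BBinv BinvB]] u x y du ux BTAuy.
have TAu : hconv ip (fun k => T (A (u k))) (Binv y).
  move=> e /(hconv_bounded Binvbd BTAuy)[N BN].
  by exists N => k /BN; rewrite BinvB.
have [dAx TAx] := Tclosed _ _ _ du (hconv_bounded Abd ux) TAu.
by rewrite TAx BBinv.
Qed.

End BoundedOperators.

Theorem lemmaB1 (R : realType) (n : nat) (X : Type) (H : lmodType R[i])
  (ip : H -> H -> R[i])
  (ev : H -> X -> 'rV[R[i]]_n)
  (conjH : H -> H)
  (dom0 : H -> Prop) (D : H -> H)
  (WL WR WLinv WRinv : H -> H) (c : R) :
  (* H is a complex Hilbert space of C^n-valued functions on X *)
  is_hilbert ip ->
  (forall (a : R[i]) f g, ev (a *: f + g) = fun x => a *: ev f x + ev g x) ->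
  injective ev ->
  (* conjH is complex conjugation (C Psi)(x) = conj (Psi x) *)
  (forall f x, ev (conjH f) x = map_mx (@conjc R) (ev f x)) ->
  (* D selfadjoint with domain D_0 *)
  selfadjoint ip dom0 D ->
  (* W_L, W_R bounded selfadjoint *)
  bounded_selfadjoint ip WL -> bounded_selfadjoint ip WR ->
  (forall f, WL (WR f) = WR (WL f)) ->
  bounded_inverse ip WL WLinv -> bounded_inverse ip WR WRinv ->
  bounded_selfadjoint ip (fun f => WR (WLinv f)) ->
  0 < c -> op_ge_scalar ip (fun f => WR (WLinv f)) c ->
  (* M = W_L D W_R on D_R = W_R^{-1} D_0 *)
  let domR := fun f => dom0 (WR f) in
  let M := fun f => WL (D (WR f)) in
  (* C D_R = D_R *)
  (forall f, domR f -> domR (conjH f)) ->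
  (forall g, domR g -> exists f, domR f /\ conjH f = g) ->
  (* C M C = - M *)
  (forall f, domR f -> conjH (M (conjH f)) = - M f) ->
  closed_op ip domR M.
Proof.
move=> [ipP _] _ _ _ Dsa _ [WRbd _] _ WL_inverse _ _ _ _ domR M _ _ _.
exact: closed_op_bounded_comp (selfadjoint_closed ipP Dsa) WRbd WL_inverse.
Qed.
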